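(* Let $G=(V,E)$ be a finite simple graph and $v\in V$. Let $G/v$ denote the graph obtained from $G$ by deleting $v$ (and its incident edges) and making the open neighbourhood $N_G(v)$ a clique (adding an edge between any two non-adjacent vertices of $N_G(v)$; already adjacent pairs remain simply adjacent). Then $$\gamma_{coe}(G)-\deg(v)-1\leq \gamma_{coe}(G/v)\leq \gamma_{coe}(G)+\deg(v)-1.$$
   Context: All graphs are finite and simple. For a graph $G=(V,E)$ and $v\in V$, $N_G(v)=\{u\in V: uv\in E\}$ and $\deg(v)=|N_G(v)|$. A set $D\subseteq V$ is a dominating set if every vertex of $V\setminus D$ is adjacent to at least one vertex of $D$. A dominating set $D$ is a co-even dominating set if $\deg(v)$ is even for every $v\in V\setminus D$ (degrees taken in the graph under consideration). The co-even domination number $\gamma_{coe}(G)$ is the minimum cardinality of a co-even dominating set of $G$. *)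

From mathcomp Require Import all_boot.
Set Implicit Arguments. Unset Strict Implicit. Unset Printing Implicit Defensive.

(* A finite simple graph: vertex type T : finType, adjacency e : rel T,
   assumed symmetric and irreflexive in the theorem. *)

Definition nbhd (T : finType) (e : rel T) (v : T) : {set T} := [set u | e v u].
Definition deg (T : finType) (e : rel T) (v : T) : nat := #|nbhd e v|.

Definition dominating (T : finType) (e : rel T) (D : {set T}) : bool :=
  [forall x, (x \notin D) ==> [exists y in D, e x y]].

Definition coeven_dominating (T : finType) (e : rel T) (D : {set T}) : bool :=
  dominating e D && [forall x, (x \notin D) ==> ~~ odd (deg e x)].

(* minimum cardinality of a co-even dominating set; V itself is one,
   so the minimum is attained and bounded by #|T|. *)
Definition gamma_coe (T : finType) (e : rel T) : nat :=
  \big[minn/#|T|]_(D : {set T} | coeven_dominating e D) #|D|.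

Definition contr_rel (T : finType) (e : rel T) (v : T) : rel {x : T | x != v} :=
  fun x y => e (val x) (val y) || [&& val x != val y, e v (val x) & e v (val y)].
Arguments contr_rel {T} e v.

From mathcomp Require Import all_boot order.
Import Order.TTheory.

Set Implicit Arguments.
Unset Strict Implicit.
Unset Printing Implicit Defensive.

(* A co-even dominating set D' of G/v becomes one of G after adding v and
   N(v); conversely, the trace on V - v of a co-even dominating set D of G,
   enlarged by N(v), is co-even dominating in G/v. In both directions every
   vertex left outside the new set is a non-neighbour of v, and such vertices
   have the same neighbourhood, hence the same degree, in G and in G/v. The
   saving of one vertex in the second direction comes from v: either v lies
   in D and is dropped, or v is dominated by a vertex of D that is also in
   N(v) and so is counted only once. *)

Lemma coeven_dominating_setT (T : finType) (e : rel T) :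
  coeven_dominating e [set: T].
Proof. by apply/andP; split; apply/forallP => x; rewrite in_setT. Qed.

Lemma gamma_coe_min (T : finType) (e : rel T) (D : {set T}) :
  coeven_dominating e D -> gamma_coe e <= #|D|.
Proof. exact: (@bigmin_le_cond _ nat _ #|T| D _ (fun D => #|D|)). Qed.

Lemma gamma_coe_witness (T : finType) (e : rel T) :
  exists2 D : {set T}, coeven_dominating e D & #|D| = gamma_coe e.
Proof.
have [|D coeD min_D] := @eq_bigmin _ nat _ #|T| setT (coeven_dominating e)
  (fun D : {set T} => #|D|) (coeven_dominating_setT e).
  by move=> D _; apply: max_card.
by exists D => //; symmetry; exact: min_D.
Qed.

Section Contraction.

Variables (T : finType) (e : rel T) (v : T).
Hypothesis esym : symmetric e.

Local Notation T' := {x : T | x != v}.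
Local Notation ev := (contr_rel e v).

Lemma contr_rel_nonnbhd (x y : T') :
  ~~ e v (val x) -> ev x y = e (val x) (val y).
Proof. by move=> /negbTE vx; rewrite /contr_rel vx andbF orbF. Qed.

Lemma nbhd_contr_rel_nonnbhd (x : T') :
  ~~ e v (val x) -> val @: nbhd ev x = nbhd e (val x).
Proof.
move=> vx; apply/setP => y; rewrite [RHS]in_set.
have [->|yv] := eqVneq y v.
  rewrite esym (negbTE vx); apply/imsetP => -[z _ zv].
  by move: (valP z); rewrite -zv eqxx.
rewrite -[y]/(val (exist _ y yv : T')) mem_imset; last exact: val_inj.
by rewrite in_set contr_rel_nonnbhd.
Qed.

Lemma deg_contr_rel_nonnbhd (x : T') :
  ~~ e v (val x) -> deg ev x = deg e (val x).
Proof.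
by move=> vx; rewrite /deg -nbhd_contr_rel_nonnbhd // card_imset //; apply: val_inj.
Qed.

Definition uncontract_set (D' : {set T'}) : {set T} :=
  v |: (nbhd e v :|: val @: D').

Lemma card_uncontract_set (D' : {set T'}) :
  #|uncontract_set D'| <= #|D'| + deg e v + 1.
Proof.
rewrite cardsU1 addnC leq_add ?leq_b1 // addnC.
by apply: leq_trans (leq_card_setU _ _) _; rewrite card_imset //; apply: val_inj.
Qed.

Lemma notin_uncontract_set (D' : {set T'}) (x : T) :
  x \notin uncontract_set D' ->
  exists x' : T', [/\ val x' = x, ~~ e v x & x' \notin D'].
Proof.
rewrite !in_setU1 in_setU in_set !negb_or => /and3P [xv vx xD].
exists (exist _ x xv); split=> //.
by apply: contra xD => x'D; apply/imsetP; exists (exist _ x xv).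
Qed.

Lemma coeven_dominating_uncontract (D' : {set T'}) :
  coeven_dominating ev D' -> coeven_dominating e (uncontract_set D').
Proof.
case/andP => /forallP domD' /forallP evenD'.
apply/andP; split; apply/forallP => x; apply/implyP;
  case/notin_uncontract_set => x' [<- vx x'D].
- have /existsP [y' /andP [y'D xy']] := implyP (domD' x') x'D.
  apply/existsP; exists (val y'); rewrite -contr_rel_nonnbhd // xy' andbT.
  by rewrite !in_setU mem_imset ?y'D ?orbT //; apply: val_inj.
- by rewrite -(deg_contr_rel_nonnbhd vx); apply: (implyP (evenD' x')).
Qed.

Definition contract_set (D : {set T}) : {set T'} :=
  [set x | (val x \in D) || e v (val x)].

Lemma val_contract_set (D : {set T}) :
  val @: contract_set D = (D :|: nbhd e v) :\ v.
Proof.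
apply/setP => y; rewrite in_setD1 in_setU [y \in nbhd e v]in_set.
have [->|yv] := eqVneq y v.
  by apply/imsetP => -[z _ zv]; move: (valP z); rewrite -zv eqxx.
rewrite -[y]/(val (exist _ y yv : T')) mem_imset ?in_set //; exact: val_inj.
Qed.

Lemma card_contract_set (D : {set T}) :
  dominating e D -> #|contract_set D| + 1 <= #|D| + deg e v.
Proof.
move=> /forallP domD.
rewrite -(card_imset _ val_inj) val_contract_set /deg -cardsUI.
have [vD|vD] := boolP (v \in D).
  by rewrite [#|D :|: _|](cardsD1 v) in_setU vD addnC leq_addr.
have /existsP [y /andP [yD vy]] := implyP (domD v) vD.
rewrite leq_add ?subset_leq_card ?subsetDl // card_gt0.
by apply/set0Pn; exists y; rewrite in_setI yD in_set.
Qed.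

Lemma coeven_dominating_contract (D : {set T}) :
  coeven_dominating e D -> coeven_dominating ev (contract_set D).
Proof.
case/andP => /forallP domD /forallP evenD.
apply/andP; split; apply/forallP => x; apply/implyP;
  rewrite in_set negb_or => /andP [xD vx].
- have /existsP [y /andP [yD xy]] := implyP (domD (val x)) xD.
  have yv : y != v by move: xy; apply: contraTneq => ->; rewrite esym.
  apply/existsP; exists (exist _ y yv).
  by rewrite in_set yD contr_rel_nonnbhd.
- by rewrite (deg_contr_rel_nonnbhd vx); apply: (implyP (evenD (val x))).
Qed.

End Contraction.

Theorem mainTheorem4 (T : finType) (e : rel T) (v : T)
  (esym : symmetric e) (eirr : irreflexive e) :
  gamma_coe e <= gamma_coe (contr_rel e v) + deg e v + 1 /\
  gamma_coe (contr_rel e v) + 1 <= gamma_coe e + deg e v.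
Proof.
split.
- have [D' coeD' <-] := gamma_coe_witness (contr_rel e v).
  apply: leq_trans (card_uncontract_set e D').
  exact/gamma_coe_min/coeven_dominating_uncontract.
- have [D coeD <-] := gamma_coe_witness e.
  have /andP [domD _] := coeD.
  apply: leq_trans (card_contract_set v domD).
  by rewrite leq_add2r; apply/gamma_coe_min/coeven_dominating_contract.
Qed.
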